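(* Let $G$ be a group with identity $e$, $A$ a set containing two distinct elements $0$ and $1$, and $S \subseteq G$ finite with $e \in S$ and $S \neq \{e\}$. Let $p \in A^S$ be given by $p(e) = 1$ and $p(s) = 0$ for $s \in S \setminus\{e\}$, and let $\tau : A^G \to A^G$ be the lazy cellular automaton with minimal local map $\mu : A^S \to A$, unique active transition $p$ and writing symbol $\mu(p) = 0$. Then for any $n\geq 2$, $\mathrm{ord}(\tau) > n$ if and only if there exists a word $(s_1, \dots, s_{n-1}) \in (S\setminus\{e\})^{n-1}$ such that $(s_j \cdots s_i)^{-1} \notin S$ for all $1 \le i \leq j \le n-1$.
   Context: $A^G$ is the set of maps $G \to A$ with shift action $(g\cdot x)(h) := x(hg)$. A cellular automaton is a map $\tau : A^G \to A^G$ with a finite $S \subseteq G$ and $\mu : A^S \to A$ such that $\tau(x)(g) = \mu((g\cdot x)|_S)$; the minimal local map is the local defining map on the neighborhood of smallest cardinality. $\tau$ is lazy with unique active transition $p \in A^S$ and writing symbol $\mu(p)$ if $e \in S$ and for all $z \in A^S$: $\mu(z) = z(e)$ iff $z \neq p$. $\tau^k$ is the $k$-fold composition, $\tau^0$ the identity; $\mathrm{ord}(\tau) := |\{\tau^k : k \in \mathbb{N}\}|$, $\mathbb{N}=\{0,1,\dots\}$. A word of length $m$ on $T \subseteq G$ is an element of $T^m$. *)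

From Stdlib Require Import List Arith.
Import ListNotations.

Record is_group (G : Type) (mul : G -> G -> G) (inv : G -> G) (e : G) : Prop := {
  grp_assoc : forall x y z, mul x (mul y z) = mul (mul x y) z;
  grp_mul1l : forall x, mul e x = x;
  grp_mul1r : forall x, mul x e = x;
  grp_mulVl : forall x, mul (inv x) x = e;
  grp_mulVr : forall x, mul x (inv x) = e
}.

Definition finite_subset {G : Type} (S : G -> Prop) : Prop :=
  exists l : list G, forall g, S g <-> In g l.

Definition elt {G : Type} (S : G -> Prop) := { s : G | S s }.

Definition shift {G A : Type} (mul : G -> G -> G) (g : G) (x : G -> A) : G -> A :=
  fun h => x (mul h g).

Definition is_CA_with {G A : Type} (mul : G -> G -> G) (S : G -> Prop)
  (tau : (G -> A) -> (G -> A)) (mu : (elt S -> A) -> A) : Prop :=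
  forall x g, tau x g = mu (fun s : elt S => shift mul g x (proj1_sig s)).

Definition lazy_with {G A : Type} {S : G -> Prop} {e : G} (he : S e)
  (mu : (elt S -> A) -> A) (p : elt S -> A) : Prop :=
  forall z : elt S -> A, mu z = z (exist S e he) <-> z <> p.

Fixpoint iter_fun {X : Type} (k : nat) (f : X -> X) : X -> X :=
  match k with
  | 0 => fun x => x
  | S k' => fun x => f (iter_fun k' f x)
  end.

(* ord(tau) > n : the set {tau^k : k in N} has more than n elements,
   i.e. it contains n+1 pairwise distinct elements. *)
Definition ord_gt {X : Type} (tau : X -> X) (n : nat) : Prop :=
  exists l : list (X -> X),
    NoDup l /\ length l = S n /\ forall f, In f l -> exists k, f = iter_fun k tau.

Fixpoint seg_prod {G : Type} (mul : G -> G -> G) (f : nat -> G) (i k : nat) : G :=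
  match k with
  | 0 => f i
  | S k' => mul (f (i + S k')) (seg_prod mul f i k')
  end.

(* For a word w = (s_1, ..., s_m) (stored as a list, s_i = nth (i-1) w),
   the product s_j ... s_i for 1 <= i <= j <= m. *)
Definition word_prod {G : Type} (mul : G -> G -> G) (d : G) (w : list G) (i j : nat) : G :=
  seg_prod mul (fun m => nth (m - 1) w d) i (j - i).

(* Since [mu p] = 0, the automaton only ever turns a 1 into a 0, and it does so at
   cell h exactly when h carries a 1 while every neighbour s h (s in S, s <> e)
   carries a 0.  Hence the iterates stabilise as soon as two consecutive ones agree,
   and ord(tau) > n means that for some x some cell g changes at step n-1, i.e.
   tau^(n-1) x and tau^n x differ at g.  Following the changes
   backwards, a cell that changes at step t+1 has a neighbour s h that changes at
   step t, which yields a walk g, s_1 g, s_2 s_1 g, ... of length n-1 whose j-th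
   cell changes at step n-1-j.  If (s_j ... s_i)^-1 were in S, the (i-1)-th cell
   would be a neighbour of the j-th one and would already be 0 when it should
   change.  Conversely, given such a word, the configuration that is 1 exactly on
   the walk s_k ... s_1 (0 <= k <= n-1) is erased one cell per step from the far
   end, so its first n+1 iterates are pairwise distinct. *)

From Stdlib Require Import List Arith Lia FunctionalExtensionality Classical ClassicalEpsilon.
Import ListNotations.

Section Iterates.

Variables (X : Type) (f : X -> X).

Lemma iter_fun_add a b x : iter_fun (a + b) f x = iter_fun a f (iter_fun b f x).
Proof. induction a as [|a IH]; simpl; congruence. Qed.

Lemma iter_fun_periodic a b :
  a < b -> iter_fun a f = iter_fun b f ->
  forall k, exists j, j < b /\ iter_fun k f = iter_fun j f.
Proof.
  intros Hab Eab k; induction k as [k IH] using lt_wf_ind.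
  destruct (Nat.lt_ge_cases k b) as [Hk|Hk]; [now exists k|].
  destruct (IH (k - b + a)) as [j [Hj Ej]]; [lia|].
  exists j; split; [exact Hj|]; rewrite <- Ej.
  extensionality x.
  replace k with (k - b + b) at 1 by lia.
  now rewrite !iter_fun_add, Eab.
Qed.

Lemma ord_gt_iff_iter_injective n :
  ord_gt f n <-> forall a b, a < b <= n -> iter_fun a f <> iter_fun b f.
Proof.
  split.
  - intros [l [Hnd [Hlen Hin]]] a b Hab Eab.
    assert (Hincl : incl l (map (fun j => iter_fun j f) (seq 0 b))).
    { intros g Hg; destruct (Hin g Hg) as [k ->].
      destruct (iter_fun_periodic a b ltac:(lia) Eab k) as [j [Hj Ej]].
      rewrite Ej; apply in_map_iff; exists j; split; [reflexivity | apply in_seq; lia]. }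
    apply NoDup_incl_length in Hincl; [|exact Hnd].
    rewrite length_map, length_seq in Hincl; lia.
  - intros Hinj.
    exists (map (fun k => iter_fun k f) (seq 0 (S n))); repeat split.
    + apply NoDup_map_NoDup_ForallPairs; [|apply seq_NoDup].
      intros a b Ha Hb Eab; apply in_seq in Ha, Hb.
      destruct (Nat.lt_total a b) as [Hlt|[Heq|Hgt]]; [| exact Heq |].
      * now destruct (Hinj a b ltac:(lia)).
      * now destruct (Hinj b a ltac:(lia)).
    + now rewrite length_map, length_seq.
    + intros g Hg; apply in_map_iff in Hg; destruct Hg as [k [<- _]]; now exists k.
Qed.

End Iterates.

Section LazyAutomaton.

Variables (G : Type) (mul : G -> G -> G) (inv : G -> G) (e : G).
Hypothesis hG : is_group G mul inv e.

Let mulA := grp_assoc G mul inv e hG.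
Let mul1g := grp_mul1l G mul inv e hG.
Let mulg1 := grp_mul1r G mul inv e hG.
Let mulVg := grp_mulVl G mul inv e hG.
Let mulgV := grp_mulVr G mul inv e hG.

Lemma mulKg x y : mul (inv x) (mul x y) = y.
Proof. now rewrite mulA, mulVg, mul1g. Qed.

Lemma mul_cancel_r a s t : mul s a = mul t a -> s = t.
Proof.
  intros E.
  rewrite <- (mulg1 s), <- (mulg1 t), <- (mulgV a), !mulA.
  now rewrite E.
Qed.

Lemma inv_unique_l s x : mul s x = e -> s = inv x.
Proof. intros E; rewrite <- (mulg1 s), <- (mulgV x), mulA, E; apply mul1g. Qed.

Fixpoint word_walk (w : list G) (c : G) (k : nat) : G :=
  match k with
  | 0 => c
  | S k' => mul (nth k' w e) (word_walk w c k')
  end.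

Lemma word_walk_split w c i j :
  1 <= i <= j ->
  word_walk w c j = mul (word_prod mul e w i j) (word_walk w c (i - 1)).
Proof.
  intros Hij; unfold word_prod.
  replace j with (i + (j - i)) at 1 by lia.
  induction (j - i) as [|k IH].
  - destruct i as [|i]; [lia|]; simpl.
    now rewrite Nat.add_0_r, Nat.sub_0_r.
  - rewrite Nat.add_succ_r; simpl seg_prod; simpl word_walk.
    rewrite IH, mulA; do 3 f_equal; lia.
Qed.

Lemma word_walk_app w s c k :
  k <= length w -> word_walk (w ++ [s]) c k = word_walk w c k.
Proof.
  induction k as [|k IH]; intros Hk; [reflexivity|]; simpl.
  rewrite app_nth1, IH by lia; reflexivity.
Qed.

Lemma word_walk_app_last w s c :
  word_walk (w ++ [s]) c (S (length w)) = mul s (word_walk w c (length w)).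
Proof. simpl; now rewrite nth_middle, word_walk_app. Qed.

Variables (A : Type) (a0 a1 : A).
Hypothesis h01 : a0 <> a1.
Variable S : G -> Prop.
Hypothesis he : S e.
Variable p : elt S -> A.
Hypothesis hp : forall s : elt S,
  (proj1_sig s = e -> p s = a1) /\ (proj1_sig s <> e -> p s = a0).
Variables (tau : (G -> A) -> (G -> A)) (mu : (elt S -> A) -> A).
Hypotheses (htau : is_CA_with mul S tau mu) (hlazy : lazy_with he mu p)
  (hwrite : mu p = a0).

Definition active (y : G -> A) (h : G) : Prop :=
  y h = a1 /\ forall s, S s -> s <> e -> y (mul s h) = a0.

Lemma tau_active y h : active y h -> tau y h = a0.
Proof.
  intros [Hh Hs]; rewrite htau, <- hwrite; f_equal.
  extensionality s; destruct s as [s HSs]; unfold shift; simpl.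
  destruct (classic (s = e)) as [->|Hne].
  - rewrite mul1g, Hh; symmetry; now apply (hp (exist S e HSs)).
  - rewrite Hs by assumption; symmetry; now apply (hp (exist S s HSs)).
Qed.

Lemma tau_inactive y h : ~ active y h -> tau y h = y h.
Proof.
  intros Hna; rewrite htau.
  unfold shift; rewrite (proj2 (hlazy _)); simpl; [now rewrite mul1g|].
  intros Ep; apply Hna; split.
  - rewrite <- (mul1g h).
    change (y (mul e h)) with ((fun s : elt S => y (mul (proj1_sig s) h)) (exist S e he)).
    rewrite Ep; now apply hp.
  - intros s HSs Hne.
    change (y (mul s h)) with ((fun s : elt S => y (mul (proj1_sig s) h)) (exist S s HSs)).
    rewrite Ep; now apply hp.
Qed.

Lemma tau_changes y h : tau y h <> y h -> active y h.
Proof. intros Hc; apply NNPP; intros Hna; exact (Hc (tau_inactive y h Hna)). Qed.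

Lemma tau_a0 y h : y h = a0 -> tau y h = a0.
Proof.
  intros Hh; destruct (classic (active y h)) as [Ha|Hna].
  - now apply tau_active.
  - now rewrite tau_inactive.
Qed.

Definition flips (x : G -> A) (t : nat) (h : G) : Prop :=
  iter_fun t tau x h <> iter_fun (Datatypes.S t) tau x h.

Lemma iter_a0_stable x h t t' :
  t <= t' -> iter_fun t tau x h = a0 -> iter_fun t' tau x h = a0.
Proof. induction 1; intros Ht; [exact Ht|]; simpl; now apply tau_a0, IHle. Qed.

Lemma flips_active x t h : flips x t h -> active (iter_fun t tau x) h.
Proof. intros Hf; apply tau_changes; intros E; exact (Hf (eq_sym E)). Qed.

Lemma a0_not_flips x t t' h : t' <= t -> iter_fun t' tau x h = a0 -> ~ flips x t h.
Proof.
  intros Ht Ha0 Hf; apply Hf.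
  rewrite (iter_a0_stable x h t' t) by assumption; symmetry.
  apply (iter_a0_stable x h t'); [lia | exact Ha0].
Qed.

Lemma flips_clears_neighbourhood x t h s :
  flips x t h -> S s -> iter_fun (Datatypes.S t) tau x (mul s h) = a0.
Proof.
  intros Hf HSs; destruct (flips_active x t h Hf) as [_ Hn].
  destruct (classic (s = e)) as [->|Hne].
  - rewrite mul1g; simpl; now apply tau_active, flips_active.
  - apply (iter_a0_stable x _ t); [lia | now apply Hn].
Qed.

(* A 1 that is erased at step t+1 survived step t, so at step t one of its
   neighbours still carried a 1; that neighbour is erased at step t. *)
Lemma flips_pred x t c :
  flips x (Datatypes.S t) c -> exists s, S s /\ s <> e /\ flips x t (mul s c).
Proof.
  intros Hf; set (y := iter_fun t tau x).
  assert (Ha : active (tau y) c) by exact (flips_active x _ c Hf).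
  destruct Ha as [Hc Hn].
  assert (Hna : ~ active y c).
  { intros Ha; apply h01; rewrite <- (tau_active y c Ha); exact Hc. }
  assert (Hyc : y c = a1) by now rewrite <- (tau_inactive y c Hna).
  apply not_and_or in Hna; destruct Hna as [|Hna]; [contradiction|].
  apply not_all_ex_not in Hna; destruct Hna as [s Hs].
  apply imply_to_and in Hs; destruct Hs as [HSs Hs].
  apply imply_to_and in Hs; destruct Hs as [Hne Hs].
  exists s; repeat split; [exact HSs | exact Hne |].
  unfold flips; change (y (mul s c) <> tau y (mul s c)).
  rewrite (Hn s HSs Hne); exact Hs.
Qed.

Lemma flips_walk x m g :
  flips x m g -> forall k, k <= m ->
  exists w, length w = k /\ (forall s, In s w -> S s /\ s <> e) /\
    forall j, j <= k -> flips x (m - j) (word_walk w g j).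
Proof.
  intros Hg k; induction k as [|k IH]; intros Hk.
  - exists []; split; [reflexivity|]; split; [now intros s []|].
    intros j Hj; replace j with 0 by lia; now rewrite Nat.sub_0_r.
  - destruct (IH ltac:(lia)) as [w [Hlen [Hw Hflips]]].
    assert (Hlast := Hflips k (le_n k)).
    replace (m - k) with (Datatypes.S (m - Datatypes.S k)) in Hlast by lia.
    destruct (flips_pred x _ _ Hlast) as [s [HSs [Hne Hs]]].
    exists (w ++ [s]); split; [|split].
    + rewrite length_app, Hlen; simpl; lia.
    + intros s' Hs'; apply in_app_or in Hs'; destruct Hs' as [H|[<-|[]]]; auto.
    + intros j Hj; destruct (Nat.eq_dec j (Datatypes.S k)) as [->|Hjk].
      * rewrite <- Hlen, word_walk_app_last, Hlen; exact Hs.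
      * rewrite word_walk_app by lia; apply Hflips; lia.
Qed.

Lemma word_of_ord_gt m :
  ord_gt tau (Datatypes.S m) ->
  exists w, length w = m /\ (forall s, In s w -> S s /\ s <> e) /\
    forall i j, 1 <= i -> i <= j -> j <= m -> ~ S (inv (word_prod mul e w i j)).
Proof.
  intros Hord.
  assert (Hneq := proj1 (ord_gt_iff_iter_injective _ _ _) Hord m (Datatypes.S m) ltac:(lia)).
  assert (Hflip : exists x g, flips x m g).
  { apply NNPP; intros Hno; apply Hneq.
    extensionality x; extensionality g.
    apply NNPP; intros Hd; apply Hno; now exists x, g. }
  destruct Hflip as [x [g Hg]].
  destruct (flips_walk x m g Hg m (le_n m)) as [w [Hlen [Hw Hflips]]].
  exists w; split; [exact Hlen|]; split; [exact Hw|].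
  intros i j Hi Hij Hj HS.
  set (P := word_prod mul e w i j) in HS.
  (* the (i-1)-th cell is the neighbour P^-1 of the j-th, so it is 0 too early *)
  assert (Hnb : word_walk w g (i - 1) = mul (inv P) (word_walk w g j)).
  { rewrite (word_walk_split w g i j) by lia; symmetry; apply mulKg. }
  apply (a0_not_flips x (m - (i - 1)) (Datatypes.S (m - j)) (word_walk w g (i - 1)));
    [lia | | apply Hflips; lia].
  rewrite Hnb; apply flips_clears_neighbourhood; [apply Hflips; lia | exact HS].
Qed.

Section WordConfiguration.

Variables (m : nat) (w : list G).
Hypotheses (hlen : m <= length w) (hletters : forall s, In s w -> S s /\ s <> e)
  (hfree : forall i j, 1 <= i -> i <= j -> j <= m -> ~ S (inv (word_prod mul e w i j))).

Let d := word_walk w e.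

Lemma walk_not_neighbour k k' s : k < k' <= m -> S s -> mul s (d k') <> d k.
Proof.
  intros Hk HSs E.
  set (P := word_prod mul e w (Datatypes.S k) k').
  assert (Hsplit : d k' = mul P (d k)).
  { unfold d; rewrite (word_walk_split w e (Datatypes.S k) k') by lia.
    now rewrite Nat.sub_succ, Nat.sub_0_r. }
  apply (hfree (Datatypes.S k) k'); try lia; fold P.
  replace (inv P) with s; [exact HSs|].
  apply inv_unique_l, (mul_cancel_r (d k)).
  now rewrite <- mulA, <- Hsplit, mul1g.
Qed.

Definition alive (t : nat) (h : G) : Prop := exists k, k + t <= m /\ h = d k.

Definition config (t : nat) : G -> A :=
  fun h => if excluded_middle_informative (alive t h) then a1 else a0.

Lemma config_alive t h : alive t h -> config t h = a1.
Proof. unfold config; now destruct excluded_middle_informative. Qed.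

Lemma config_dead t h : ~ alive t h -> config t h = a0.
Proof. unfold config; now destruct excluded_middle_informative. Qed.

(* The cell d k has the next cell d (k+1) = s_(k+1) d k as a neighbour, so only
   the last cell still alive is active. *)
Lemma tau_config t : tau (config t) = config (Datatypes.S t).
Proof.
  extensionality h.
  destruct (classic (alive (Datatypes.S t) h)) as [Hl|Hd].
  - rewrite (config_alive _ _ Hl); destruct Hl as [k [Hk ->]].
    rewrite tau_inactive; [apply config_alive; exists k; split; [lia | reflexivity]|].
    intros [_ Hn].
    assert (Hin : In (nth k w e) w) by (apply nth_In; lia).
    destruct (hletters _ Hin) as [HSs Hne].
    specialize (Hn _ HSs Hne); apply h01; rewrite <- Hn.
    apply config_alive; exists (Datatypes.S k); split; [lia | reflexivity].
  - rewrite (config_dead _ _ Hd).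
    destruct (classic (alive t h)) as [[k [Hk ->]]|Hd'].
    + apply tau_active; split; [apply config_alive; now exists k|].
      intros s HSs Hne; apply config_dead; intros [k' [Hk' E]].
      destruct (Nat.lt_total k' k) as [Hlt|[->|Hgt]].
      * apply (walk_not_neighbour k' k s ltac:(lia) HSs E).
      * apply Hne, (mul_cancel_r (d k)); now rewrite mul1g.
      * apply Hd; exists k; split; [lia | reflexivity].
    + now apply tau_a0, config_dead.
Qed.

Lemma iter_config t : iter_fun t tau (config 0) = config t.
Proof. induction t as [|t IH]; simpl; [reflexivity|]; now rewrite IH, tau_config. Qed.

Lemma ord_gt_of_word : ord_gt tau (Datatypes.S m).
Proof.
  apply ord_gt_iff_iter_injective; intros a b Hab E.
  assert (Ea := iter_config a); assert (Eb := iter_config b).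
  apply (f_equal (fun y => y (d (m - a)))) in Ea, Eb.
  apply h01; rewrite <- (config_dead b (d (m - a))), <- (config_alive a (d (m - a))).
  - now rewrite <- Ea, <- Eb, E.
  - exists (m - a); split; [lia | reflexivity].
  - intros [k [Hk Ek]].
    apply (walk_not_neighbour k (m - a) e ltac:(lia) he); now rewrite mul1g.
Qed.

End WordConfiguration.

End LazyAutomaton.

Theorem proposition4
  (G : Type) (mul : G -> G -> G) (inv : G -> G) (e : G)
  (hG : is_group G mul inv e)
  (A : Type) (a0 a1 : A) (h01 : a0 <> a1)
  (S : G -> Prop) (hSfin : finite_subset S) (he : S e)
  (hSne : exists s, S s /\ s <> e)
  (p : elt S -> A)
  (hp : forall s : elt S,
          (proj1_sig s = e -> p s = a1) /\ (proj1_sig s <> e -> p s = a0))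
  (tau : (G -> A) -> (G -> A)) (mu : (elt S -> A) -> A)
  (htau : is_CA_with mul S tau mu)
  (hlazy : lazy_with he mu p)
  (hwrite : mu p = a0)
  (n : nat) (hn : 2 <= n) :
  ord_gt tau n <->
  exists w : list G,
    length w = n - 1 /\
    (forall s, In s w -> S s /\ s <> e) /\
    (forall i j, 1 <= i -> i <= j -> j <= n - 1 ->
       ~ S (inv (word_prod mul e w i j))).
Proof.
  destruct n as [|m]; [lia|].
  replace (Datatypes.S m - 1) with m by lia.
  split.
  - eapply word_of_ord_gt; eauto.
  - intros [w [Hlen [Hw Hfree]]].
    eapply ord_gt_of_word; eauto; lia.
Qed.
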